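(* Let $A\in M_n(R)$ be a non-singular triangular matrix, and write $f_A(x)=\sum_{k=0}^n a_kx^k$, $f_{A^\nabla}(x)=\sum_{k=0}^n b_kx^k$. Then $\det(A)f_{A^\nabla}(x)=x^nf_A(x^{-1})$, i.e. $\det(A)b_k=a_{n-k}$ for all $k=0,\dots,n$.
   Context: Supertropical semiring $R=T\cup G\cup\{-\infty\}$: $T=\mathcal G$ an ordered abelian group (tangible), $G=\{a^\nu\}$ a copy (ghost); $a+b$ is the element of larger $\nu$-value if the $\nu$-values differ and $a^\nu$ if equal; multiplication adds $\nu$-values, is ghost if a factor is ghost, $-\infty$ absorbing; $0_R=-\infty$, $1_R=0$. $\det(A)=\sum_{\sigma\in S_n}\prod_i a_{i,\sigma(i)}$; $A$ non-singular iff $\det(A)\in T$. $\operatorname{adj}(A)_{i,j}=\det(A_{j,i})$; $A^\nabla=\det(A)^{-1}\operatorname{adj}(A)$. Triangular means all entries above (or all below) the diagonal equal $0_R$. The characteristic polynomial $f_M(x)=\det(xI+M)$ has $x^k$-coefficient the sum of determinants of all $(n-k)\times(n-k)$ principal submatrices of $M$; $x^nf_A(x^{-1})$ denotes the polynomial $\sum_{k=0}^n a_{n-k}x^k$. *)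

From HB Require Import structures.
From mathcomp Require Import all_boot all_order all_algebra all_fingroup.
Set Implicit Arguments. Unset Strict Implicit. Unset Printing Implicit Defensive.
Import GRing.Theory.

(* An ordered abelian group: an additive abelian group G (written additively,
   so that the tangible product a*b is a+b) with a total order [le] that is
   translation invariant. *)
Definition ordered_abgroup (G : zmodType) (le : rel G) : Prop :=
  [/\ reflexive le, antisymmetric le, transitive le, total le &
      forall a b c : G, le a b -> le (a + c)%R (b + c)%R].

(* Elements of R = T ∪ G ∪ {-∞}. *)
Inductive st (G : Type) := NegInf | Tan of G | Gho of G.
Arguments NegInf {G}.

Section Supertropical.
Variables (G : zmodType) (le : rel G).

Definition nu (x : st G) : G :=
  match x with NegInf => 0%R | Tan a => a | Gho a => a end.

Definition sadd (x y : st G) : st G :=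
  match x, y with
  | NegInf, _ => y
  | _, NegInf => x
  | _, _ => if nu x == nu y then Gho (nu x)
            else if le (nu x) (nu y) then y else x
  end.

Definition smul (x y : st G) : st G :=
  match x, y with
  | NegInf, _ => NegInf
  | _, NegInf => NegInf
  | Tan a, Tan b => Tan (a + b)%R
  | _, _ => Gho (nu x + nu y)%R
  end.

Definition sone : st G := Tan 0%R.

Definition sinv (x : st G) : st G :=
  match x with NegInf => NegInf | Tan a => Tan (- a)%R | Gho a => Gho (- a)%R end.

Definition tangible (x : st G) : bool :=
  if x is Tan _ then true else false.

Definition sdet (m : nat) (A : 'M[st G]_m) : st G :=
  \big[sadd/NegInf]_(s : 'S_m) \big[smul/sone]_(i < m) A i (s i).

Definition sminor (n : nat) (A : 'M[st G]_n) (r c : 'I_n) : 'M[st G]_(n.-1) :=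
  \matrix_(a < n.-1, b < n.-1) A (insubd r (bump r a)) (insubd c (bump c b)).

Definition sadj (n : nat) (A : 'M[st G]_n) : 'M[st G]_n :=
  \matrix_(i, j) sdet (sminor A j i).

Definition snabla (n : nat) (A : 'M[st G]_n) : 'M[st G]_n :=
  \matrix_(i, j) smul (sinv (sdet A)) (sadj A i j).

Definition sprinc (n : nat) (A : 'M[st G]_n) (S : {set 'I_n}) : 'M[st G]_(#|S|) :=
  \matrix_(a, b) A (enum_val a) (enum_val b).

(* k-th coefficient of f_M(x) = det(xI + M): the sum of the determinants of all
   (n-k)x(n-k) principal submatrices of M (meaningful for k <= n). *)
Definition scharcoef (n : nat) (M : 'M[st G]_n) (k : nat) : st G :=
  \big[sadd/NegInf]_(S : {set 'I_n} | #|S| == (n - k)%N) sdet (sprinc M S).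

Definition striangular (n : nat) (A : 'M[st G]_n) : Prop :=
  (forall i j : 'I_n, (i < j)%N -> A i j = NegInf) \/
  (forall i j : 'I_n, (j < i)%N -> A i j = NegInf).

Definition snonsingular (n : nat) (A : 'M[st G]_n) : bool := tangible (sdet A).

End Supertropical.

From HB Require Import structures.
From mathcomp Require Import all_boot all_order all_algebra all_fingroup.
From mathcomp Require Import zify.
Set Implicit Arguments. Unset Strict Implicit. Unset Printing Implicit Defensive.
Import GRing.Theory.

(* For a triangular matrix every permutation other than the identity meets a
   -oo entry, so the determinant of a triangular matrix, and of each of its
   principal submatrices, is the product of its diagonal entries.  When A is
   non-singular its diagonal entries are therefore tangible, say g_i.  The
   adjugate of A is triangular in the same direction: for i <> j on the
   vanishing side, the row and column indices of the minor A_{j,i} have sums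
   differing by i - j, so every permutation term of det(A_{j,i}) meets a -oo
   entry.  Its diagonal entries are det(A_{i,i}) = det(A) - g_i, so A^nabla is
   triangular with diagonal (-g_i).  Hence the x^k coefficient of f_{A^nabla}
   is the sum over |S| = n - k of -sum_{i in S} g_i; multiplying it by
   det(A) = sum_i g_i and reindexing by S |-> ~S gives the sum over |T| = k of
   sum_{i in T} g_i, the x^{n-k} coefficient of f_A. *)

Lemma smulA (G : zmodType) : associative (@smul G).
Proof. by case=> [|a|a] [|b|b] [|c|c] //=; rewrite addrA. Qed.

Lemma smulC (G : zmodType) : commutative (@smul G).
Proof. by case=> [|a|a] [|b|b] //=; rewrite addrC. Qed.

Lemma smul1 (G : zmodType) : left_id (sone G) (@smul G).
Proof. by case=> [|a|a] //=; rewrite add0r. Qed.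

HB.instance Definition _ (G : zmodType) :=
  Monoid.isComLaw.Build (st G) (sone G) (@smul G) (@smulA G) (@smulC G) (@smul1 G).

Lemma prod_Tan (G : zmodType) I (r : seq I) (P : pred I) (f : I -> G) :
  \big[@smul G/sone G]_(i <- r | P i) Tan (f i) = Tan (\sum_(i <- r | P i) f i)%R.
Proof. by rewrite (big_morph (@Tan G) (op1 := @smul G) (id1 := sone G)). Qed.

Lemma prod_NegInf (G : zmodType) (I : finType) (F : I -> st G) i :
  F i = NegInf -> \big[@smul G/sone G]_j F j = NegInf.
Proof. by move=> Fi; rewrite (bigD1 i) //= Fi. Qed.

Lemma prod_tangible (G : zmodType) (I : finType) (F : I -> st G) :
  tangible (\big[@smul G/sone G]_i F i) -> forall i, F i = Tan (nu (F i)).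
Proof.
move=> tanF i; move: tanF; rewrite (bigD1 i) //=.
by case: (F i) => //= a; case: (\big[_/_]_(_ | _) _).
Qed.

(* [ahead b x y]: y lies strictly beyond x, upwards if [b] and downwards
   otherwise; it describes the vanishing half of a triangular matrix. *)
Definition ahead (b : bool) (x y : nat) : bool := if b then x < y else y < x.

Lemma ltn_sum_exists (I : finType) (f g : I -> nat) :
  \sum_i f i < \sum_i g i -> exists i, f i < g i.
Proof.
move=> lt_fg; have [i lt_i | no_i] := pickP (fun i => f i < g i); first by exists i.
suff : \sum_i g i <= \sum_i f i by rewrite leqNgt lt_fg.
by apply: leq_sum => i _; rewrite leqNgt no_i.
Qed.

Lemma ahead_sum_perm b m (s : 'S_m) (f g : 'I_m -> nat) :
  ahead b (\sum_i f i) (\sum_i g i) -> exists a, ahead b (f a) (g (s a)).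
Proof.
have sum_gs : \sum_i g i = \sum_i g (s i) by apply: reindex_inj; apply: perm_inj.
rewrite sum_gs; case: b => /ltn_sum_exists [a lt_a]; by exists a.
Qed.

(* A non-identity permutation has an ascent for any injective ranking [h]:
   take the moved point of least rank. *)
Lemma perm_ascent m (s : 'S_m) (h : 'I_m -> nat) :
  injective h -> s != 1%g -> exists a, h a < h (s a).
Proof.
move=> inj_h s_ne1.
have [a0 moved_a0] : exists a0, s a0 != a0.
  have [a0 moved | fixed] := pickP (fun a => s a != a); first by exists a0.
  by case/eqP: s_ne1; apply/permP => a; rewrite perm1; apply/eqP/negbFE/fixed.
case: (@arg_minnP _ _ (fun a => s a != a) h moved_a0) => a moved_a min_a; exists a.
have moved_sa : s (s a) != s a by rewrite (inj_eq perm_inj).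
by rewrite ltn_neqAle min_a // andbT (inj_eq inj_h) eq_sym.
Qed.

(* Hence it has a step in either direction (a descent comes from s^-1). *)
Lemma perm_ahead b m (s : 'S_m) (h : 'I_m -> nat) :
  injective h -> s != 1%g -> exists a, ahead b (h a) (h (s a)).
Proof.
move=> inj_h s_ne1; case: b; first exact: perm_ascent.
have [|a lt_a] := @perm_ascent m s^-1 h inj_h; first by rewrite invg_eq1.
by exists (s^-1%g a); rewrite /ahead permKV.
Qed.

Lemma sum_lift m (j : 'I_m.+1) :
  (j + \sum_(a < m) lift j a = \sum_(k < m.+1) k)%N.
Proof. by rewrite (bigD1_ord j). Qed.

Lemma big_card_setC (R : Type) (idx : R) (op : Monoid.com_law idx)
    (T : finType) (F : {set T} -> R) k :
  k <= #|T| ->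
  \big[op/idx]_(S : {set T} | #|S| == #|T| - k) F (~: S) =
  \big[op/idx]_(S : {set T} | #|S| == k) F S.
Proof.
move=> le_kT; rewrite (reindex_inj (@setC_inj _)); apply: eq_big => [S | S _] /=.
  have := cardsC S; move: #|S| #|~: S| #|T| le_kT => c c' t ? ?.
  by apply/eqP/eqP => ?; lia.
by rewrite setCK.
Qed.

Section Supertropical.
Variables (G : zmodType) (le : rel G) (HG : ordered_abgroup le).

Lemma le_total a b : le a b || le b a.
Proof. by case: HG => _ _ _ tot _; apply: tot. Qed.

Lemma le_anti a b : le a b -> le b a -> a = b.
Proof. by case: HG => _ anti _ _ _ ab ba; apply: anti; rewrite ab ba. Qed.

Lemma le_trans a b c : le a b -> le b c -> le a c.
Proof. by case: HG => _ _ tr _ _; apply: tr. Qed.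

Lemma le_add2l c a b : le (c + a)%R (c + b)%R = le a b.
Proof.
case: HG => _ _ _ _ mono; rewrite ![(c + _)%R]addrC.
by apply/idP/idP => [/(mono _ _ (- c)%R)|/mono //]; rewrite !addrK.
Qed.

(* Decision procedure for the goals of the case analyses below: hypotheses
   are (in)equalities and comparisons between elements of the total order
   [le]; substitute equalities, turn failed comparisons into reverse ones,
   close under transitivity, then identify elements related both ways. *)
Ltac total_order_solve :=
  repeat match goal with
  | H : (?a == ?b) = true |- _ => move/eqP: H => H; subst
  | H : is_true (?a == ?b) |- _ => move/eqP: H => H; subst
  | H : (?a == ?a) = false |- _ => by rewrite eqxx in H
  | H : le ?a ?b = false |- _ => have := le_total a b; rewrite H /= => ?; clear H
  end; try done;
  repeat match goal with
  | H1 : is_true (le ?a ?b), H2 : is_true (le ?b ?c) |- _ =>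
      lazymatch goal with
      | _ : is_true (le a c) |- _ => fail
      | _ => have := le_trans H1 H2; move=> ?
      end
  end;
  repeat match goal with
  | H1 : is_true (le ?a ?b), H2 : is_true (le ?b ?a) |- _ =>
      have ? := le_anti H1 H2; clear H1 H2; subst
  end; try done;
  repeat match goal with
  | H : (?a == ?a) = false |- _ => by rewrite eqxx in H
  end.

Lemma saddC : commutative (sadd le).
Proof.
case=> [|a|a] [|b|b] //=; rewrite [b == a]eq_sym;
  case: eqP => [->//|ne]; case: ifP => ?; case: ifP => ? //; total_order_solve.
Qed.

Lemma saddA : associative (sadd le).
Proof.
case=> [|a|a] [|b|b] [|c|c] //=; repeat (case: ifP => ? /=); total_order_solve.
Qed.

Lemma sadd0 : left_id NegInf (sadd le). Proof. by []. Qed.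

HB.instance Definition _ :=
  Monoid.isComLaw.Build (st G) NegInf (sadd le) saddA saddC sadd0.

Lemma smul_Tan_sum c I (r : seq I) (P : pred I) F :
  smul (Tan c) (\big[sadd le/NegInf]_(i <- r | P i) F i) =
  \big[sadd le/NegInf]_(i <- r | P i) smul (Tan c) (F i).
Proof.
apply: big_endo => // x y.
case: x => [|a|a]; case: y => [|b|b] //=;
  rewrite ?(inj_eq (addrI c)) ?le_add2l; by case: (_ == _) => //; case: ifP.
Qed.

Definition triangular_by b m (h : 'I_m -> nat) (M : 'M[st G]_m) : Prop :=
  forall i j, ahead b (h i) (h j) -> M i j = NegInf.

Lemma sdet_triangular b m (h : 'I_m -> nat) (M : 'M[st G]_m) :
  injective h -> triangular_by b h M -> sdet le M = \big[@smul G/sone G]_i M i i.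
Proof.
move=> inj_h triM; rewrite /sdet (bigD1 1%g) //= [X in sadd _ _ X]big1 ?Monoid.mulm1.
  by apply: eq_bigr => i _; rewrite perm1.
move=> s s_ne1; have [a ahead_a] := perm_ahead b inj_h s_ne1.
exact: (prod_NegInf (i := a) (triM _ _ ahead_a)).
Qed.

Lemma sminorE m (A : 'M[st G]_m.+1) r c a b :
  sminor A r c a b = A (lift r a) (lift c b).
Proof.
have insubd_bump (k : 'I_m.+1) (x : 'I_m) : insubd k (bump k x) = lift k x.
  by apply: val_inj; rewrite val_insubd (ltn_ord (lift k x)).
by rewrite mxE !insubd_bump.
Qed.

(* The adjoint of a triangular matrix is triangular in the same direction:
   if j is beyond i then the row-index sum of the minor A_{j,i} is beyond its
   column-index sum, so each permutation term meets a vanishing entry. *)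
Lemma snabla_triangular b n (A : 'M[st G]_n) :
  triangular_by b val A -> triangular_by b val (snabla le A).
Proof.
case: n A => [|m] A triA i j ij; first by case: i ij.
rewrite !mxE; suff -> : sdet le (sminor A j i) = NegInf by case: (sinv _).
rewrite /sdet big1 // => s _.
have sums : ahead b (\sum_(a < m) lift j a) (\sum_(a < m) lift i a).
  by have := sum_lift i; have := sum_lift j; case: b {triA} ij => /= ij ? ?; lia.
have [a ahead_a] := ahead_sum_perm s sums.
by apply: (prod_NegInf (i := a)); rewrite sminorE; apply: triA.
Qed.

(* The diagonal of the adjoint of a triangular matrix with tangible diagonal
   (g_i) is (-g_i): det(A_{i,i}) = det(A) - g_i. *)
Lemma snabla_diag b n (A : 'M[st G]_n) (g : 'I_n -> G) :
  triangular_by b val A -> (forall i, A i i = Tan (g i)) ->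
  forall i, snabla le A i i = Tan (- g i)%R.
Proof.
case: n A g => [|m] A g triA Ag i; first by case: i.
have detA : sdet le A = Tan (\sum_j g j)%R.
  rewrite (sdet_triangular val_inj triA).
  by rewrite (eq_bigr (fun j => Tan (g j))) ?prod_Tan.
have detAii : sdet le (sminor A i i) = Tan (\sum_a g (lift i a))%R.
  rewrite (@sdet_triangular b _ (fun a => val (lift i a))); first last.
  - by move=> x y; rewrite !sminorE; apply: triA.
  - by move=> x y /val_inj/lift_inj.
  by rewrite (eq_bigr (fun a => Tan (g (lift i a)))) ?prod_Tan // => a _; rewrite sminorE.
by rewrite !mxE detA detAii (bigD1_ord i) //= opprD addrNK.
Qed.

Lemma sdet_sprinc b n (M : 'M[st G]_n) (f : 'I_n -> G) (S : {set 'I_n}) :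
  triangular_by b val M -> (forall i, M i i = Tan (f i)) ->
  sdet le (sprinc M S) = Tan (\sum_(i in S) f i)%R.
Proof.
move=> triM Mf; rewrite (@sdet_triangular b _ (fun a => val (enum_val a))).
- under eq_bigr => a _ do rewrite mxE Mf.
  by rewrite prod_Tan (big_enum_val (A := mem S)).
- by move=> x y /val_inj/enum_val_inj.
- by move=> x y; rewrite mxE; apply: triM.
Qed.

Lemma scharcoef_triangular b n (M : 'M[st G]_n) (f : 'I_n -> G) k :
  triangular_by b val M -> (forall i, M i i = Tan (f i)) ->
  scharcoef le M k =
  \big[sadd le/NegInf]_(S : {set 'I_n} | #|S| == (n - k)%N) Tan (\sum_(i in S) f i)%R.
Proof. by move=> triM Mf; apply: eq_bigr => S _; exact: sdet_sprinc triM Mf. Qed.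

End Supertropical.

Theorem mainTheorem10 (G : zmodType) (le : rel G) (HG : ordered_abgroup le)
  (n : nat) (A : 'M[st G]_n) :
  striangular A -> snonsingular le A ->
  forall k : nat, (k <= n)%N ->
    smul (sdet le A) (scharcoef le (snabla le A) k) = scharcoef le A (n - k).
Proof.
move=> triA nsA k le_kn.
have [b triA_b] : exists b, triangular_by b val A.
  by case: triA => triA; [exists true | exists false].
have detA := sdet_triangular HG val_inj triA_b.
pose g i := nu (A i i).
have Ag : forall i, A i i = Tan (g i) by apply: prod_tangible; rewrite -detA; exact: nsA.
have -> : sdet le A = Tan (\sum_i g i)%R.
  by rewrite detA (eq_bigr _ (fun i _ => Ag i)) prod_Tan.
rewrite (scharcoef_triangular HG k (snabla_triangular HG triA_b) (snabla_diag HG triA_b Ag)).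
rewrite (scharcoef_triangular HG _ triA_b Ag) smul_Tan_sum //= subKn //.
have compl := big_card_setC (sadd le) (fun S : {set 'I_n} => Tan (\sum_(i in S) g i)%R).
rewrite card_ord in compl; rewrite -compl //.
apply: eq_bigr => S _ /=; congr Tan.
have sum_compl : (\sum_(i in ~: S) g i = \sum_(i | i \notin S) g i)%R.
  by apply: eq_bigl => i; rewrite in_setC.
by rewrite sumrN sum_compl [X in (X - _)%R](bigID (mem S)) /= addrAC subrr add0r.
Qed.
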